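(* Let $A\in\mathbb{C}^{n\times n}$ be nonsingular, $b\in\mathbb{C}^n$, $x_0\in\mathbb{C}^n$ and $r_0=b-Ax_0$. Let $W\in\mathbb{C}^{n\times k}$ have linearly independent columns spanning a subspace $\mathcal{W}$. Define $Q_3=W(W^HA^HAW)^{-1}W^H$, $P_4=I_n-Q_3A^HA$, $P_5=I_n-AQ_3A^H$, $\hat A=P_5A$, $\hat r_0=P_5r_0$, and let $\mathcal{K}=\mathcal{K}_m(\hat A,\hat r_0)$. Then the following two sets of conditions are equivalent: (i) $x_m\in x_0+\mathcal{W}+\mathcal{K}$ and $r_m=b-Ax_m\perp (A\mathcal{W}+A\mathcal{K})$; (ii) $\tilde x_m\in x_0+\mathcal{K}$ and $\tilde r_m:=P_5(b-A\tilde x_m)\perp A\mathcal{K}$, in the following sense: if $\tilde x_m$ satisfies (ii), then $x_m:=P_4\tilde x_m+Q_3A^Hb$ satisfies (i) and $r_m=\tilde r_m$; conversely, if $x_m$ satisfies (i), then there exists $\tilde x_m$ satisfying (ii) with $x_m=P_4\tilde x_m+Q_3A^Hb$ and $r_m=\tilde r_m$.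
   Context: $\mathcal{K}_m(B,v)=\mathrm{span}(v,Bv,\dots,B^{m-1}v)$ denotes the Krylov subspace. Orthogonality $\perp$ is with respect to the canonical Euclidean inner product $\langle x,y\rangle=y^Hx$ on $\mathbb{C}^n$; for subspaces $\mathcal{U}$, $A\mathcal{U}=\{Au: u\in\mathcal{U}\}$. ${}^H$ denotes conjugate transpose. *)

(* Complex numbers: an arbitrary numClosedFieldType C
   (e.g. algC), with conjugation Num.conj (z^* ). *)
From HB Require Import structures.
From mathcomp Require Import all_boot all_order all_algebra.
Set Implicit Arguments. Unset Strict Implicit. Unset Printing Implicit Defensive.
Import Order.TTheory GRing.Theory Num.Theory.
Local Open Scope ring_scope.

Definition conjT (C : numClosedFieldType) (p q : nat) (A : 'M[C]_(p, q)) : 'M[C]_(q, p) :=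
  (map_mx Num.conj A)^T.

Definition cdot (C : numClosedFieldType) (n : nat) (x y : 'cV[C]_n) : C :=
  (conjT y *m x) 0 0.

Definition in_colspan (C : numClosedFieldType) (n k : nat) (W : 'M[C]_(n, k)) (y : 'cV[C]_n) : Prop :=
  exists c : 'cV[C]_k, y = W *m c.

Definition in_krylov (C : numClosedFieldType) (n m : nat) (B : 'M[C]_n) (v y : 'cV[C]_n) : Prop :=
  exists c : 'I_m -> C, y = \sum_(i < m) c i *: iter i (mulmx B) v.

From HB Require Import structures.
From mathcomp Require Import all_boot all_order all_algebra.
From mathcomp Require Import sesquilinear spectral.
Set Implicit Arguments. Unset Strict Implicit. Unset Printing Implicit Defensive.
Import Order.TTheory GRing.Theory Num.Theory.
Local Open Scope ring_scope.

(* Write B := A W.  Since A is invertible and W has full column rank, the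
   Gram matrix M := B^H B = W^H A^H A W is invertible, A Q3 A^H = B M^-1 B^H is
   the orthogonal projector onto the range of B, and P5 = I - A Q3 A^H kills
   that range: B^H P5 = 0.  The affine map
       corr v := v + Q3 A^H (b - A v)      (= P4 v + Q3 A^H b)
   adds to v the unique correction W c for which b - A (v + W c) is
   orthogonal to the range of B, and the corrected residual is
   b - A (corr v) = P5 (b - A v). *)

Section ConjugateTranspose.
Variable C : numClosedFieldType.

Lemma conjT_mul p q r (X : 'M[C]_(p, q)) (Y : 'M[C]_(q, r)) :
  conjT (X *m Y) = conjT Y *m conjT X.
Proof. by rewrite /conjT map_mxM trmx_mul. Qed.

Lemma conjTD p q (X Y : 'M[C]_(p, q)) : conjT (X + Y) = conjT X + conjT Y.
Proof. by rewrite /conjT map_mxD linearD. Qed.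

Lemma conjTK p q (X : 'M[C]_(p, q)) : conjT (conjT X) = X.
Proof. by apply/matrixP=> i j; rewrite /conjT !mxE conjCK. Qed.

(* Conjugation is a field automorphism, so it preserves the rank. *)
Lemma mxrank_conjT p q (X : 'M[C]_(p, q)) : \rank (conjT X) = \rank X.
Proof. by rewrite /conjT mxrank_tr mxrank_map. Qed.

Lemma cdotDr n (r y1 y2 : 'cV[C]_n) : cdot r (y1 + y2) = cdot r y1 + cdot r y2.
Proof. by rewrite /cdot conjTD mulmxDl mxE. Qed.

Lemma cdot_colspan0P n k (B : 'M[C]_(n, k)) (r : 'cV[C]_n) :
  (forall c, cdot r (B *m c) = 0) <-> conjT B *m r = 0.
Proof.
have cdotE c : cdot r (B *m c) = (conjT c *m (conjT B *m r)) 0 0.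
  by rewrite /cdot conjT_mul mulmxA.
split=> [orth | BHr0 c]; last by rewrite cdotE BHr0 mulmx0 mxE.
apply/matrixP=> i j; rewrite (ord1 j) [RHS]mxE.
have delta_conjT : conjT (delta_mx i 0 : 'cV[C]_k) = delta_mx 0 i.
  by rewrite /conjT map_delta_mx trmx_delta.
by have := orth (delta_mx i 0); rewrite cdotE delta_conjT -rowE mxE.
Qed.

Lemma rV_gram_eq0 n (u : 'rV[C]_n) : u *m conjT u = 0 -> u = 0.
Proof.
rewrite /conjT map_trmx => uu0; apply/eqP; rewrite -(dnorm_eq0 (@dotmx C n)).
apply/eqP; transitivity ((u *m map_mx Num.conj u^T) 0 0); first exact: dotmxE.
by rewrite uu0 mxE.
Qed.

Lemma gram_unit n k (B : 'M[C]_(n, k)) : \rank B = k -> conjT B *m B \in unitmx.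
Proof.
move=> rankB; rewrite unitmxE unitfE; apply/negP=> /det0P[v v_neq0 vM0].
have BH_free : row_free (conjT B) by rewrite /row_free mxrank_conjT rankB.
suff vBH0 : v *m conjT B = 0.
  by move/negP: v_neq0; apply; rewrite -(mulmx_free_eq0 _ BH_free) vBH0.
by apply: rV_gram_eq0; rewrite conjT_mul conjTK mulmxA -(mulmxA v) vM0 mul0mx.
Qed.

End ConjugateTranspose.

Section ProjectedSystem.
Variables (C : numClosedFieldType) (n k : nat).
Variables (A : 'M[C]_n) (W : 'M[C]_(n, k)) (b : 'cV[C]_n).
Hypotheses (hA : A \in unitmx) (hW : \rank W = k).

Local Notation M := (conjT W *m conjT A *m A *m W).
Local Notation Q3 := (W *m invmx M *m conjT W).
Local Notation P4 := (1%:M - Q3 *m conjT A *m A).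
Local Notation P5 := (1%:M - A *m Q3 *m conjT A).
(* Minimal-residual correction of v over the space spanned by W. *)
Local Notation corr v := (v + Q3 *m conjT A *m (b - A *m v)).

Lemma gram_AW : M = conjT (A *m W) *m (A *m W).
Proof. by rewrite conjT_mul !mulmxA. Qed.

(* B = A W keeps the full column rank of W, so its Gram matrix is invertible. *)
Lemma gram_AW_unit : M \in unitmx.
Proof.
rewrite gram_AW gram_unit // -[RHS]hW -mxrank_tr trmx_mul mxrankMfree ?mxrank_tr //.
by rewrite row_free_unit unitmx_tr.
Qed.

Lemma P5_orth_AW (r : 'cV[C]_n) : conjT (A *m W) *m (P5 *m r) = 0.
Proof.
rewrite (mulmxA (conjT _)) mulmxBr mulmx1 conjT_mul !mulmxA mulmxV ?gram_AW_unit //.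
by rewrite mul1mx subrr mul0mx.
Qed.

Lemma P4_affine v : P4 *m v + Q3 *m conjT A *m b = corr v.
Proof. by rewrite mulmxBl mul1mx mulmxBr !mulmxA addrAC addrA. Qed.

Lemma residual_corr v : b - A *m corr v = P5 *m (b - A *m v).
Proof. by rewrite mulmxDr mulmxBl mul1mx !mulmxA opprD addrA. Qed.

Lemma corr_colspan v : in_colspan W (Q3 *m conjT A *m (b - A *m v)).
Proof. by exists (invmx M *m conjT W *m conjT A *m (b - A *m v)); rewrite !mulmxA. Qed.

Lemma orth_AW_corr v c :
  conjT (A *m W) *m (b - A *m (v + W *m c)) = 0 -> v + W *m c = corr v.
Proof.
rewrite mulmxDr opprD addrA mulmxBr (mulmxA A W c) mulmxA -gram_AW.
move/eqP; rewrite subr_eq0 => /eqP normal_eq; congr (_ + _).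
by rewrite -[c](mulKmx gram_AW_unit) -normal_eq conjT_mul !mulmxA.
Qed.

End ProjectedSystem.

Theorem proposition1 (C : numClosedFieldType) (n k m : nat)
  (A : 'M[C]_n) (b x0 : 'cV[C]_n) (W : 'M[C]_(n, k))
  (hA : A \in unitmx) (hW : \rank W = k) :
  let r0 := b - A *m x0 in
  let Q3 := W *m invmx (conjT W *m conjT A *m A *m W) *m conjT W in
  let P4 := 1%:M - Q3 *m conjT A *m A in
  let P5 := 1%:M - A *m Q3 *m conjT A in
  let Ahat := P5 *m A in
  let rhat0 := P5 *m r0 in
  (* condition (i) on x *)
  let cond_i := fun x : 'cV[C]_n =>
    (exists w z : 'cV[C]_n, in_colspan W w /\ in_krylov m Ahat rhat0 z /\ x = x0 + w + z) /\
    (forall w z : 'cV[C]_n, in_colspan W w -> in_krylov m Ahat rhat0 z ->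
       cdot (b - A *m x) (A *m w + A *m z) = 0) in
  (* condition (ii) on xt *)
  let cond_ii := fun xt : 'cV[C]_n =>
    (exists z : 'cV[C]_n, in_krylov m Ahat rhat0 z /\ xt = x0 + z) /\
    (forall z : 'cV[C]_n, in_krylov m Ahat rhat0 z ->
       cdot (P5 *m (b - A *m xt)) (A *m z) = 0) in
  (forall xt : 'cV[C]_n, cond_ii xt ->
     let xm := P4 *m xt + Q3 *m conjT A *m b in
     cond_i xm /\ b - A *m xm = P5 *m (b - A *m xt)) /\
  (forall xm : 'cV[C]_n, cond_i xm ->
     exists xt : 'cV[C]_n, cond_ii xt /\
       xm = P4 *m xt + Q3 *m conjT A *m b /\
       b - A *m xm = P5 *m (b - A *m xt)).
Proof.
move=> r0 Q3 P4 P5 Ahat rhat0 cond_i cond_ii.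
(* 0 lies in the Krylov space, which isolates the W-part of condition (i). *)
have krylov0 : in_krylov m Ahat rhat0 0.
  by exists (fun _ => 0); rewrite big1 // => i _; rewrite scale0r.
(* (ii) => (i): x_m is the corrected iterate of x~_m = x0 + z. *)
split=> [xt [[z [kz ->]] orthK] xm | xm [[_ [z [[c ->] [kz ->]]] orth]]].
  have xm_corr : xm = (x0 + z) + Q3 *m conjT A *m (b - A *m (x0 + z)).
    exact: P4_affine.
  have resid : b - A *m xm = P5 *m (b - A *m (x0 + z)).
    by rewrite xm_corr; apply: residual_corr.
  split=> //; split.
    exists (Q3 *m conjT A *m (b - A *m (x0 + z))), z.
    by split; [apply: corr_colspan | split; rewrite // xm_corr addrAC].
  move=> _ z' [c ->] kz'; rewrite resid cdotDr (orthK z' kz') addr0 mulmxA.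
  exact/(proj2 (cdot_colspan0P _ _))/P5_orth_AW.
(* (i) => (ii): testing (i) against A W alone identifies the W-component of
   x_m = x0 + W c + z as the correction of x~_m := x0 + z. *)
have xm_corr : x0 + z + W *m c = (x0 + z) + Q3 *m conjT A *m (b - A *m (x0 + z)).
  apply: orth_AW_corr => //; apply/cdot_colspan0P => c'; rewrite addrAC.
  have := orth (W *m c') 0 (ex_intro _ c' erefl) krylov0.
  by rewrite mulmx0 addr0 mulmxA.
rewrite addrAC xm_corr; exists (x0 + z); split; last first.
  by split; [rewrite P4_affine | apply: residual_corr].
split=> [|z' kz']; first by exists z.
have := orth 0 z' (ex_intro _ 0 (esym (mulmx0 _ _))) kz'.
by rewrite mulmx0 add0r -residual_corr -xm_corr addrAC.
Qed.
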